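(* Let $f$ be a noisy process with noise variance $\sigma^2>0$ and $\pi_f$ its posterior prediction map. Then $\pi_f$ is continuous: if $D_i\to D$ in $(\mathcal D,d_{\mathcal D})$, then $\pi_f(D_i)\rightharpoonup\pi_f(D)$ in the sense of weak convergence of noisy processes.
   Context: A stochastic process $f$ on $\mathbb R$ is noisy with noise variance $\sigma^2>0$ if $f=f^{\mathrm s}+f^{\mathrm n}$ with $f^{\mathrm s},f^{\mathrm n}$ independent, $f^{\mathrm s}$ (smooth part) having continuous sample paths, and $(f^{\mathrm n}(x_1),\dots,f^{\mathrm n}(x_n))\sim\mathcal N(\mathbf 0,\sigma^2\mathbf I_n)$ for pairwise distinct $x_i$. Data sets: $\mathcal D=\bigcup_{n\ge0}(\mathbb R\times\mathbb R)^n$, $D=(\mathbf x,\mathbf y)$, with metric $d_{\mathcal D}(D_1,D_2)=\|\mathbf x_1-\mathbf x_2\|_2+\|\mathbf y_1-\mathbf y_2\|_2$ if $|\mathbf x_1|=|\mathbf x_2|$ and $\infty$ otherwise. Posterior prediction map: for $D=(\mathbf x,\mathbf y)$, let $f^{\mathrm s}_D$ have law $\mu^{\mathrm s}_D$ with $\frac{d\mu^{\mathrm s}_D}{d\mu^{\mathrm s}}(g)=\frac{\mathcal N(\mathbf y\mid g(\mathbf x),\sigma^2\mathbf I)}{\mathbb E[\mathcal N(\mathbf y\mid f^{\mathrm s}(\mathbf x),\sigma^2\mathbf I)]}$, where $\mu^{\mathrm s}$ is the law of $f^{\mathrm s}$ on $C(\mathbb R,\mathbb R)$; $\pi_f(D)$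 is the noisy process $f^{\mathrm s}_D+\hat f^{\mathrm n}$ with $\hat f^{\mathrm n}$ an independent copy of $f^{\mathrm n}$. Weak convergence of noisy processes: $f_i\rightharpoonup f$ iff $f^{\mathrm s}_i\rightharpoonup f^{\mathrm s}$ weakly as random elements of $C(\mathbb R,\mathbb R)$ with the topology of uniform convergence on compact sets, and the noise variances converge. *)

From HB Require Import structures.
From mathcomp Require Import all_boot all_order all_algebra.
From mathcomp Require Import all_classical all_reals all_analysis.
Set Implicit Arguments. Unset Strict Implicit. Unset Printing Implicit Defensive.
Import Order.TTheory GRing.Theory Num.Theory.
Import numFieldNormedType.Exports.
Local Open Scope classical_set_scope.
Local Open Scope ring_scope.

Section gp_defs.
Context {R : realType}.

(** The space of functions R -> R with the topology of uniform convergence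
    on compact sets (compact convergence). C(R,R) is the subspace
    [cont_fns] of continuous functions. *)
Definition ucc := {family compact, R -> R}.
Definition cont_fns : set ucc := [set g : ucc | continuous (g : R -> R)].

Definition dataset := seq (R * R).

Definition dD (D1 D2 : dataset) : \bar R :=
  if size D1 == size D2 then
    (Num.sqrt (\sum_(p <- zip D1 D2) (p.1.1 - p.2.1) ^+ 2) +
     Num.sqrt (\sum_(p <- zip D1 D2) (p.1.2 - p.2.2) ^+ 2))%:E
  else +oo%E.

Definition likelihood (sigma2 : R) (D : dataset) (g : R -> R) : R :=
  \prod_(p <- D) normal_pdf (g p.1) (Num.sqrt sigma2) p.2.

Definition indep_families d (Omega : measurableType d) (P : probability Omega R)
  (F G : set (set Omega)) : Prop :=
  forall A B, F A -> G B -> P (A `&` B) = (P A * P B)%E.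

Definition noisy_process d (Omega : measurableType d) (P : probability Omega R)
  (f fs fn : Omega -> R -> R) (sigma2 : R) : Prop :=
  0 < sigma2 /\
      (forall w x, f w x = fs w x + fn w x) /\
      (* fs : random element of C(R,R) (Borel measurable for the ucc topology)
         with continuous sample paths *)
      (forall w, continuous (fs w)) /\
      (forall U : set ucc, open U -> measurable ((fs : Omega -> ucc) @^-1` U)) /\
      (* fn : a process (each fn(x) a random variable) whose finite-dimensional
         marginals at pairwise distinct points are N(0, sigma2 I_n) *)
      (forall x, measurable_fun setT (fun w => fn w x)) /\
      (forall (n : nat) (xs : 'I_n -> R), injective xs ->
        forall B : 'I_n -> set R, (forall i, measurable (B i)) ->
        P [set w | forall i, B i (fn w (xs i))] =
        (\prod_(i < n) normal_prob 0 (Num.sqrt sigma2) (B i))%E) /\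
      indep_families P
        (<<s [set (fs : Omega -> ucc) @^-1` U | U in [set U : set ucc | open U]] >>)
        (<<s \bigcup_(x in [set: R])
               [set (fun w => fn w x) @^-1` B | B in [set B : set R | measurable B]] >>).

(** Expectation E[h(fs_D)] of a test function h under the posterior law
    mu^s_D of the smooth part, where d mu^s_D / d mu^s (g)
      = N(y | g(x), sigma2 I) / E[N(y | fs(x), sigma2 I)],
    i.e. \int h d mu^s_D = E[h(fs) N(y|fs(x),sigma2 I)] / E[N(y|fs(x),sigma2 I)]. *)
Definition post_smooth_expect d (Omega : measurableType d) (P : probability Omega R)
  (fs : Omega -> R -> R) (sigma2 : R) (D : dataset) (h : ucc -> R) : R :=
  Rintegral P setT (fun w => h (fs w) * likelihood sigma2 D (fs w)) /
  Rintegral P setT (fun w => likelihood sigma2 D (fs w)).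

(** Weak convergence of noisy processes, given the laws of their smooth parts
    (through the expectation functionals E_ i, E of test functions) and their
    noise variances s2_ i, s2: the smooth parts converge weakly as random
    elements of C(R,R) (ucc topology) and the noise variances converge. *)
Definition noisy_weak_cvg (E_ : nat -> (ucc -> R) -> R) (s2_ : nat -> R)
  (E : (ucc -> R) -> R) (s2 : R) : Prop :=
  (forall h : ucc -> R,
      (exists M : R, forall g, cont_fns g -> `|h g| <= M) ->
      {within cont_fns, continuous h} ->
      E_ n h @[n --> \oo] --> E h) /\
  s2_ n @[n --> \oo] --> s2.

End gp_defs.

From HB Require Import structures.
From mathcomp Require Import all_boot all_order all_algebra.
From mathcomp Require Import all_classical all_reals all_analysis.
Set Implicit Arguments. Unset Strict Implicit. Unset Printing Implicit Defensive.
Import Order.TTheory GRing.Theory Num.Theory.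
Import numFieldNormedType.Exports.
Local Open Scope classical_set_scope.
Local Open Scope ring_scope.

(* For a data set D = (x, y) let L_D(g) = prod_j N(y_j | g(x_j), sigma2) be the
   Gaussian likelihood.  The posterior expectation of a bounded test function
   h, continuous on C(R,R), is the ratio E[h(fs) L_D(fs)] / E[L_D(fs)], and the
   noise variance of pi_f(D) is sigma2 for every D; so the theorem reduces to
   the convergence of these two integrals when D_i -> D.

   1. L_D(g) is jointly continuous in the data and in g: each factor is a
      Gaussian density, continuous in its mean and its argument, and data sets
      close for d_D have the same size and close points.
   2. 0 < L_D <= peak^|D|, so bounded convergence carries the pointwise limit
      L_{D_i}(fs w) -> L_D(fs w) to both integrals, and the limiting
      denominator is positive.
   3. w |-> h(fs w) and w |-> L_D(fs w) are measurable because h and L_D are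
      continuous on C(R,R) and fs is Borel measurable for compact convergence. *)

Section compact_convergence.
Context {R : realType}.

Lemma eval_continuous (t : R) : continuous (fun g : @ucc R => g t).
Proof.
move=> g.
have cvg_g := @pointwise_cvg_compact_family R R (nbhs g) g (nbhs_filter g) cvg_id.
exact: ((@pointwise_cvgP R R (nbhs g) g (nbhs_filter g)).1 cvg_g t).
Qed.

Lemma measurable_comp_within d (Omega : measurableType d) (fs : Omega -> R -> R)
    (h : @ucc R -> R) :
  (forall w, continuous (fs w)) ->
  (forall U : set (@ucc R), open U -> measurable ((fs : Omega -> ucc) @^-1` U)) ->
  {within cont_fns, continuous h} ->
  measurable_fun setT (fun w => h (fs w)).
Proof.
move=> fs_cont fs_meas h_cont.
apply: (measurability _ (measurable_realfun.RGenOpens.measurableE R)).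
move=> _ [_ [a [b ->] <-]]; rewrite setTI.
have ab_open : open (`]a, b[%classic : set R) by exact: interval_open.
(* On C(R,R), the preimage of ]a, b[ under h is the trace of an open set W. *)
have /open_subspaceP [W W_open WE] := (continuousP _).1 h_cont _ ab_open.
suff -> : (fun w => h (fs w)) @^-1` `]a, b[ = (fs : Omega -> ucc) @^-1` W.
  exact: fs_meas W_open.
apply/seteqP; split => w /= hw.
- have : (W `&` cont_fns) (fs w : ucc) by rewrite WE; split => //; exact: fs_cont.
  by case.
- have : ((from_subspace cont_fns h @^-1` `]a, b[) `&` cont_fns) (fs w : ucc).
    by rewrite -WE; split => //; exact: fs_cont.
  by case.
Qed.

End compact_convergence.

Section gaussian_likelihood.
Context {R : realType}.

Lemma normal_pdf_center (m s y : R) :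
  s != 0 -> normal_pdf m s y = normal_pdf 0 s (y - m).
Proof. by move=> s_neq0; rewrite !normal_pdfE //= /normal_fun subr0. Qed.

Lemma normal_pdf_gt0 (m s y : R) : s != 0 -> 0 < normal_pdf m s y.
Proof.
move=> s_neq0; rewrite normal_pdfE //=.
by rewrite mulr_gt0 ?expR_gt0 // normal_peak_gt0.
Qed.

Lemma cvg_normal_pdf {T : Type} (F : set_system T) {FF : Filter F} (s : R)
    (m y : T -> R) (m0 y0 : R) :
  s != 0 -> m t @[t --> F] --> m0 -> y t @[t --> F] --> y0 ->
  normal_pdf (m t) s (y t) @[t --> F] --> normal_pdf m0 s y0.
Proof.
move=> s_neq0 cvg_m cvg_y.
rewrite normal_pdf_center //; under eq_cvg do rewrite normal_pdf_center //.
apply: cvg_comp (cvgB cvg_y cvg_m) _.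
exact: continuous_normal_pdf.
Qed.

Lemma sqrt_variance_neq0 (s2 : R) : 0 < s2 -> Num.sqrt s2 != 0.
Proof. by move=> s2_gt0; rewrite gt_eqF // sqrtr_gt0. Qed.

Definition datum (D : @dataset R) (j : nat) : R * R := nth (0, 0) D j.

Lemma likelihoodE (s2 : R) (D : dataset) (g : R -> R) :
  likelihood s2 D g =
  \prod_(j < size D) normal_pdf (g (datum D j).1) (Num.sqrt s2) (datum D j).2.
Proof. by rewrite /likelihood (big_nth (0, 0)) big_mkord. Qed.

Lemma likelihood_ge0 (s2 : R) (D : dataset) (g : R -> R) :
  0 <= likelihood s2 D g.
Proof. by apply: prodr_ge0 => p _; exact: normal_pdf_ge0. Qed.

Lemma likelihood_gt0 (s2 : R) (D : dataset) (g : R -> R) :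
  0 < s2 -> 0 < likelihood s2 D g.
Proof.
by move=> s2_gt0; apply: prodr_gt0 => p _; exact/normal_pdf_gt0/sqrt_variance_neq0.
Qed.

(* Uniform bound: each factor is at most the peak of the Gaussian density. *)
Lemma likelihood_le_peak (s2 : R) (D : dataset) (g : R -> R) :
  0 < s2 -> likelihood s2 D g <= normal_peak (Num.sqrt s2) ^+ size D.
Proof.
move=> s2_gt0; rewrite likelihoodE.
apply: (@le_trans _ _ (\prod_(j < size D) normal_peak (Num.sqrt s2))).
  apply: ler_prod => j _; rewrite normal_pdf_ge0.
  exact/normal_pdf_ub/sqrt_variance_neq0.
by rewrite prodr_const card_ord.
Qed.

Lemma cvg_likelihood {T : Type} (F : set_system T) {FF : Filter F} (s2 : R)
    (Ds : T -> dataset) (gs : T -> R -> R) (D : dataset) (g : R -> R) :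
  0 < s2 ->
  (\forall t \near F, size (Ds t) = size D) ->
  (forall j, (j < size D)%N ->
     gs t (datum (Ds t) j).1 @[t --> F] --> g (datum D j).1) ->
  (forall j, (j < size D)%N -> (datum (Ds t) j).2 @[t --> F] --> (datum D j).2) ->
  likelihood s2 (Ds t) (gs t) @[t --> F] --> likelihood s2 D g.
Proof.
move=> s2_gt0 sizeE cvg_mean cvg_obs.
apply: cvg_trans (near_eq_cvg _) _.
  by apply: filterS sizeE => t sizeE_t; rewrite likelihoodE sizeE_t.
rewrite likelihoodE; apply: cvg_big => [|j _]; first exact: mul_continuous.
apply: cvg_normal_pdf; first exact: sqrt_variance_neq0.
  exact: cvg_mean.
exact: cvg_obs.
Qed.

Lemma likelihood_continuous (s2 : R) (D : dataset) :
  0 < s2 -> continuous (fun g : @ucc R => likelihood s2 D g).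
Proof.
move=> s2_gt0 g.
apply: (@cvg_likelihood _ (nbhs g) _ s2 (fun _ => D) (fun h : ucc => h)) => //.
- exact: nearW.
- by move=> j _; exact: eval_continuous.
- by move=> j _; exact: cvg_cst.
Qed.

End gaussian_likelihood.

Section dataset_metric.
Context {R : realType}.

Lemma sqr_le_sum_zip (D1 D2 : @dataset R) (c : R * R -> R) j :
  size D1 = size D2 -> (j < size D1)%N ->
  (c (datum D1 j) - c (datum D2 j)) ^+ 2 <=
  \sum_(p <- zip D1 D2) (c p.1 - c p.2) ^+ 2.
Proof.
rewrite /datum; elim: D1 D2 j => [|a D1 IH] [|b D2] [|j] //= [sizeE] lt_j.
  by rewrite big_cons ler_wpDr // sumr_ge0 // => p _; exact: sqr_ge0.
by rewrite big_cons ler_wpDl ?sqr_ge0 // IH.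
Qed.

Lemma datum_le_dD (D1 D2 : @dataset R) j :
  size D1 = size D2 -> (j < size D1)%N ->
  ((`|(datum D1 j).1 - (datum D2 j).1| + `|(datum D1 j).2 - (datum D2 j).2|)%:E
   <= dD D1 D2)%E.
Proof.
move=> sizeE lt_j; rewrite /dD sizeE eqxx lee_fin.
by apply: lerD; rewrite -sqrtr_sqr ler_wsqrtr // sqr_le_sum_zip.
Qed.

Lemma dD_cvg0_lt (Ds : nat -> @dataset R) (D : dataset) (e : R) :
  dD (Ds i) D @[i --> \oo] --> 0%E -> 0 < e ->
  \forall i \near \oo, (dD (Ds i) D < e%:E)%E.
Proof.
have e_nbhs : (0 < e%:E)%E -> nbhs (0 : \bar R)%E [set u | (u < e%:E)%E].
  exact: open_ereal_lt'.
by move=> dD_cvg0 e_gt0; apply: (dD_cvg0 _ (e_nbhs _)); rewrite lte_fin.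
Qed.

Lemma dD_cvg0_size (Ds : nat -> @dataset R) (D : dataset) :
  dD (Ds i) D @[i --> \oo] --> 0%E -> \forall i \near \oo, size (Ds i) = size D.
Proof.
move=> /dD_cvg0_lt /(_ ltr01); apply: filterS => i.
by rewrite /dD; case: eqP => // _; rewrite ltNge leey.
Qed.

Lemma dD_cvg0_datum (Ds : nat -> @dataset R) (D : dataset) j :
  dD (Ds i) D @[i --> \oo] --> 0%E -> (j < size D)%N ->
  (datum (Ds i) j).1 @[i --> \oo] --> (datum D j).1 /\
  (datum (Ds i) j).2 @[i --> \oo] --> (datum D j).2.
Proof.
move=> dD_cvg0 lt_j.
have close e : 0 < e -> \forall i \near \oo,
    `|(datum (Ds i) j).1 - (datum D j).1| +
    `|(datum (Ds i) j).2 - (datum D j).2| < e.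
  move=> e_gt0.
  apply: (filterS2 _ _ (dD_cvg0_size dD_cvg0) (dD_cvg0_lt dD_cvg0 e_gt0)).
  move=> i sizeE lt_e.
  by rewrite -lte_fin (le_lt_trans _ lt_e) // datum_le_dD // sizeE.
split; apply/cvgrPdist_lt => e e_gt0; apply: filterS (close e e_gt0) => i;
  apply: le_lt_trans; rewrite distrC.
- exact: ler_wpDr.
- exact: ler_wpDl.
Qed.

Lemma likelihood_cvg_data (s2 : R) (Ds : nat -> dataset) (D : dataset) (g : R -> R) :
  0 < s2 -> continuous g -> dD (Ds i) D @[i --> \oo] --> 0%E ->
  likelihood s2 (Ds i) g @[i --> \oo] --> likelihood s2 D g.
Proof.
move=> s2_gt0 g_cont dD_cvg0.
apply: cvg_likelihood => //; first exact: dD_cvg0_size.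
- move=> j lt_j; have [cvg_x _] := dD_cvg0_datum dD_cvg0 lt_j.
  exact: cvg_comp cvg_x (g_cont _).
- by move=> j lt_j; have [_ cvg_y] := dD_cvg0_datum dD_cvg0 lt_j.
Qed.

End dataset_metric.

Section bounded_integrals.
Context {R : realType} d (Omega : measurableType d) (P : probability Omega R).

Lemma bounded_integrable (F : Omega -> R) (C : R) :
  measurable_fun setT F -> (forall w, `|F w| <= C) ->
  P.-integrable setT (EFin \o F).
Proof.
move=> F_meas F_le.
apply: le_integrable (finite_measure_integrable_cst P C measurableT) => //.
  exact/measurable_realfun.measurable_EFinP.
move=> w _; rewrite /comp !abse_EFin lee_fin.
exact: le_trans (F_le w) (ler_norm C).
Qed.

Lemma bounded_cvg_Rintegral (F_ : nat -> Omega -> R) (F : Omega -> R) (C : R) :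
  (forall n, measurable_fun setT (F_ n)) ->
  (\forall n \near \oo, forall w, `|F_ n w| <= C) ->
  (forall w, F_ n w @[n --> \oo] --> F w) ->
  Rintegral P setT (F_ n) @[n --> \oo] --> Rintegral P setT F.
Proof.
move=> F_meas F_le cvgF.
have F_bound w : `|F w| <= C.
  by apply: cvgr_to_le (cvg_norm (cvgF w)) _; apply: filterS F_le.
have F_lim_meas : measurable_fun setT F.
  exact: (measurable_realfun.measurable_fun_cvg (h := F_)).
have intF := bounded_integrable F_lim_meas F_bound.
have [N _ F_le_N] := F_le.
rewrite -(cvg_shiftn N) /Rintegral; apply: fine_cvg.
rewrite fineK ?integrable_fin_num //.
apply: (@dominated_cvg _ _ _ P setT measurableT
  (fun n => EFin \o F_ (n + N)%N) _ (EFin \o cst C)) => //.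
- by move=> n; exact/measurable_realfun.measurable_EFinP.
- move=> w _; apply: cvg_EFin; first exact: nearW.
  by have := cvgF w; rewrite -(cvg_shiftn N).
- exact: finite_measure_integrable_cst.
- move=> n w _; rewrite /comp abse_EFin lee_fin.
  by apply: F_le_N; rewrite /= leq_addl.
Qed.

(* A positive bounded random variable has positive expectation: otherwise it
   would vanish almost surely, contradicting P setT = 1. *)
Lemma Rintegral_gt0 (F : Omega -> R) (C : R) :
  measurable_fun setT F -> (forall w, 0 < F w) -> (forall w, F w <= C) ->
  0 < Rintegral P setT F.
Proof.
move=> F_meas F_gt0 F_le.
have intF : P.-integrable setT (EFin \o F).
  by apply: (bounded_integrable F_meas) => w; rewrite gtr0_norm.
have int_ge0 : (0 <= \int[P]_(w in setT) (F w)%:E)%E.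
  by apply: integral_ge0 => w _; rewrite lee_fin ltW.
have int_neq0 : (\int[P]_(w in setT) (F w)%:E != 0)%E.
  apply/eqP => int_eq0.
  have [N [N_meas PN0 N_cover]] : ae_eq P setT (EFin \o F) (cst 0%E).
    apply/(ae_eq_integral_abs P measurableT _).1.
      exact/measurable_realfun.measurable_EFinP.
    rewrite -[RHS]int_eq0; apply: eq_integral => w _.
    by rewrite gee0_abs // lee_fin ltW.
  have : P setT = 0%E.
    apply: (subset_measure0 measurableT N_meas _ PN0) => w _.
    by apply: N_cover => /= /(_ I) /eqP; rewrite eqe gt_eqF.
  by rewrite probability_setT => /eqP; rewrite eqe oner_eq0.
apply: fine_gt0; rewrite lt0e int_neq0 int_ge0 /=.
by have /fin_numPlt/andP[] := integrable_fin_num measurableT intF.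
Qed.

End bounded_integrals.

(* Numerator and denominator of the posterior expectation converge by bounded
   convergence, and the limiting denominator is positive. *)
Theorem mainTheorem10 (R : realType) (d : measure_display)
  (Omega : measurableType d) (P : probability Omega R)
  (f fs fn : Omega -> R -> R) (sigma2 : R) :
  noisy_process P f fs fn sigma2 ->
  forall (Ds : nat -> dataset) (D : dataset),
    dD (Ds i) D @[i --> \oo] --> 0%E ->
    noisy_weak_cvg
      (fun i => post_smooth_expect P fs sigma2 (Ds i)) (fun _ => sigma2)
      (post_smooth_expect P fs sigma2 D) sigma2.
Proof.
move=> [s2_gt0 [_ [fs_cont [fs_meas _]]]] Ds D dD_cvg0.
split; last exact: cvg_cst.
move=> h [M h_le] h_cont.
pose K := normal_peak (Num.sqrt sigma2) ^+ size D.
have h_meas := measurable_comp_within fs_cont fs_meas h_cont.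
have lik_meas (D' : dataset) :
    measurable_fun setT (fun w => likelihood sigma2 D' (fs w)).
  exact/(measurable_comp_within fs_cont fs_meas)/continuous_subspaceT/likelihood_continuous.
have lik_le : \forall i \near \oo, forall w, `|likelihood sigma2 (Ds i) (fs w)| <= K.
  apply: filterS (dD_cvg0_size dD_cvg0) => i sizeE w.
  by rewrite ger0_norm ?likelihood_ge0 // /K -sizeE likelihood_le_peak.
have lik_cvg w :
    likelihood sigma2 (Ds i) (fs w) @[i --> \oo] --> likelihood sigma2 D (fs w).
  exact: likelihood_cvg_data.
rewrite /post_smooth_expect; apply: cvgM.
- apply: (@bounded_cvg_Rintegral _ _ _ _ _ _ (`|M| * K)) => [i|| w].
  + exact: measurable_realfun.measurable_funM.
  + apply: filterS lik_le => i lik_le_i w; rewrite normrM ler_pM //.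
    exact: le_trans (h_le _ (fs_cont w)) (ler_norm M).
  + exact: cvgM (cvg_cst _) (lik_cvg w).
- apply: cvgV; last exact: bounded_cvg_Rintegral lik_le lik_cvg.
  rewrite gt_eqF // (@Rintegral_gt0 _ _ _ _ _ K) // => w.
    exact: likelihood_gt0.
  exact: likelihood_le_peak.
Qed.
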